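(* For integers $n>d\ge2$, \[ \bar\delta_{n,d}\ge\frac{d^d}{(d+1)^{d+1}}\cdot\frac{(n-d)^{d+1}}{(n-d)(n-d+1)\cdots n} \] and \[ \bar\delta_{n,d}\le\frac{d^d}{(d+1)^{d+1}}\cdot\frac{\left(n-\frac{d-1}{2}\right)^{d+1}}{(n-d)(n-d+1)\cdots n}+\frac{(d+1)(n+1)}{(d-1)(n-d)^2}. \]
   Context: For integers $\lambda\ge0$, $d\ge1$, write $\lambda=\sum_{i=1}^d\binom{k_i}{i}$ uniquely with $k_d>\cdots>k_1\ge0$ and set $\lambda^{[d]}=\sum_{i=1}^d\binom{k_i}{i+1}$. For $n>d$ and $0\le\lambda\le\binom nd$ let $\delta_{n,d}(\lambda)=\lambda/\binom nd-\lambda^{[d]}/\binom n{d+1}$, and $\bar\delta_{n,d}=\max_{0\le\lambda\le\binom nd}\delta_{n,d}(\lambda)$ (denoted $\delta_{n,d}$ in the paper's section on limits). *)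

From mathcomp Require Import all_boot all_order all_algebra.
Set Implicit Arguments. Unset Strict Implicit. Unset Printing Implicit Defensive.
Import Order.TTheory GRing.Theory Num.Theory.

(* Cascade (Macaulay) representation, computed greedily:
   for i >= 1 and r, [kmax i r] is the largest k with 'C(k, i) <= r
   (such k satisfies k < r + i + 1 since 'C(r+i, i) > r for i >= 1). *)
Definition kmax (i r : nat) : nat :=
  \max_(k < (r + i).+1 | 'C(k, i) <= r) (k : nat).

(* [lam_upper i r] = r^[i] : with r = \sum_{j=1}^i 'C(k_j, j),
   k_i > ... > k_1 >= 0 (greedy = the unique representation),
   this is \sum_{j=1}^i 'C(k_j, j+1). *)
Fixpoint lam_upper (i r : nat) : nat :=
  match i with
  | 0 => 0
  | i'.+1 => 'C(kmax i r, i'.+2) + lam_upper i' (r - 'C(kmax i r, i))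
  end.

Fixpoint cascade (i r : nat) : seq nat :=
  match i with
  | 0 => [::]
  | i'.+1 => kmax i r :: cascade i' (r - 'C(kmax i r, i))
  end.

Local Open Scope ring_scope.

Definition delta_nd (R : realFieldType) (n d lam : nat) : R :=
  (lam%:R / ('C(n, d))%:R) - ((lam_upper d lam)%:R / ('C(n, d.+1))%:R).

(* \bar\delta_{n,d} = max over 0 <= lam <= 'C(n,d) of delta_{n,d}(lam).
   The base value 0 is harmless since delta_{n,d}(0) = 0 is in the range. *)
Definition delta_bar (R : realFieldType) (n d : nat) : R :=
  \big[Num.max/0]_(lam < ('C(n, d)).+1) delta_nd R n d lam.

From mathcomp Require Import all_boot all_order all_algebra.
From mathcomp Require Import zify ring lra.
Set Implicit Arguments. Unset Strict Implicit. Unset Printing Implicit Defensive.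
Import Order.TTheory GRing.Theory Num.Theory.

(* With g = (d+1)/(n-d) we have 'C(n, d+1) = 'C(n, d) (n-d)/(d+1), hence
   delta_{n,d}(lam) = (lam - g lam^[d]) / 'C(n, d), and along the cascade
   lam = sum_j 'C(k_j, j) the numerator splits into the terms
   'C(k_j, j) - g 'C(k_j, j+1).
   The top term (j = d) equals k(k-1)...(k-d+1)(n-k) / ((n-d) d!) with k = k_d;
   AM-GM bounds it by the main term of the upper bound, and lam = 'C(k, d)
   with k = d + floor(d(n-d)/(d+1)) realises the lower bound.
   A lower term (j < d) is at most 'C(j + X_j, j)/(j+1), where
   X_j = ceil((j+1)(n-d)/(d+1)) is [ceil_share j]; these numerators shrink by
   the factor (d+1)/(n+1) at each step down from j = d-1, so the lower terms
   are dominated by a weighted geometric series, which gives the error term. *)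


Lemma bin_kmax_le i r : (0 < i)%N -> ('C(kmax i r, i) <= r)%N.
Proof.
move=> i_gt0; rewrite /kmax.
apply: (big_ind (fun x => 'C(x, i) <= r)%N) => //; first by rewrite bin_small.
by move=> x y; rewrite /maxn; case: ifP.
Qed.

Lemma lam_upperS i r :
  lam_upper i.+1 r = ('C(kmax i.+1 r, i.+2) + lam_upper i (r - 'C(kmax i.+1 r, i.+1)))%N.
Proof. by []. Qed.

Lemma lam_upper0 i : lam_upper i 0 = 0%N.
Proof.
elim: i => [|i IHi] //=; rewrite sub0n IHi addn0 bin_small //.
have := @bin_kmax_le i.+1 0 isT.
by rewrite leqNgt bin_gt0 -ltnNge => /ltnW.
Qed.

Lemma ltn_bin2l k k' d : (0 < d)%N -> (d <= k.+1)%N -> (k < k')%N ->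
  ('C(k, d) < 'C(k', d))%N.
Proof.
case: d => [//|d] _ le_dk lt_kk'; apply: leq_trans (leq_bin2l _ lt_kk').
by rewrite binS -[X in (X < _)%N]addn0 ltn_add2l bin_gt0.
Qed.

Lemma leq_subn_bin k d : (0 < d)%N -> (k - d <= 'C(k, d))%N.
Proof.
move=> d_gt0; elim: k => [|k IHk]; first by rewrite sub0n.
case: (leqP d k.+1) => [le_dk | ]; last by move=> lt; rewrite (eqnP (ltnW lt)).
have := ltn_bin2l d_gt0 le_dk (ltnSn k); lia.
Qed.

Lemma kmax_bin k d : (0 < d)%N -> (d <= k)%N -> kmax d 'C(k, d) = k.
Proof.
move=> d_gt0 le_dk; apply/eqP; rewrite eqn_leq; apply/andP; split.
  apply/bigmax_leqP => k' le_k'; rewrite leqNgt; apply/negP => lt_kk'.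
  by have := ltn_bin2l d_gt0 (leqW le_dk) lt_kk'; rewrite ltnNge le_k'.
have k_lt : (k < ('C(k, d) + d).+1)%N by have := leq_subn_bin k d_gt0; lia.
exact: (@leq_bigmax_cond _ (fun k' : 'I_('C(k, d) + d).+1 => 'C(k', d) <= 'C(k, d))%N
  (fun k' => nat_of_ord k') (Ordinal k_lt) (leqnn _)).
Qed.

Lemma kmax1 r : kmax 1 r = r.
Proof.
case: r => [|r]; last by rewrite -{1}[r.+1]bin1 kmax_bin.
by have := @bin_kmax_le 1 0 isT; rewrite bin1; lia.
Qed.

Lemma lam_upper_bin k d : (0 < d)%N -> (d <= k)%N ->
  lam_upper d 'C(k, d) = 'C(k, d.+1).
Proof.
case: d => [//|d] _ le_dk /=.
by rewrite kmax_bin // subnn lam_upper0 addn0.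
Qed.

Lemma prod_bin_window n d : (d <= n)%N ->
  (\prod_(n - d <= i < n.+1) i = (n - d) * ('C(n, d) * d`!))%N.
Proof.
elim: d => [|d IHd] le_dn.
  by rewrite subn0 bin0 big_nat1 fact0 !muln1.
rewrite big_ltn; last by lia.
have -> : (n - d.+1).+1 = (n - d)%N by lia.
rewrite IHd ?(ltnW le_dn) // factS; congr (_ * _).
by rewrite !mulnA [_ * d.+1]mulnC mul_bin_left.
Qed.

Lemma leq_bin_mul_sub k j Y : (k <= Y)%N -> ('C(k, j) * (Y - k) <= 'C(Y, j.+1))%N.
Proof.
elim: Y => [|Y IHY] le_kY; first by rewrite sub0n muln0.
case: (ltnP Y k) => [lt_Yk | le_kY'].
  have -> : Y.+1 = k by lia.
  by rewrite subnn muln0.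
rewrite binS subSn // mulnS addnC leq_add ?IHY //; exact: leq_bin2l.
Qed.

Lemma bin_mul_slack_le m d j k X : 0 < X -> j.+1 * m <= X * d.+1 ->
  'C(k, j) * (j.+1 * m - d.+1 * (k - j)) <= 'C(j + X, j) * m.
Proof.
move=> X_gt0 le_aX; set a := j.+1 * m.
case: (ltnP k j) => [lt_kj | le_jk]; first by rewrite bin_small.
case: (leqP a (d.+1 * (k - j))) => [le_a | lt_a].
  have -> : a - d.+1 * (k - j) = 0 by lia.
  by rewrite muln0.
have le_kX : k <= j + X.
  suff : k - j < X by lia.
  by rewrite -(ltn_pmul2r (ltn0Sn d)); apply: leq_trans le_aX; rewrite mulnC.
have diag := mul_bin_left (j + X) j; rewrite addKn in diag.
have lower_step := leq_bin_mul_sub j le_kX.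
rewrite -(leq_pmul2r X_gt0).
apply: (@leq_trans ('C(k, j) * (a * (j + X - k)))).
  rewrite -mulnA leq_mul2l; apply/orP; right.
  have : a * (k - j) <= X * d.+1 * (k - j) by rewrite leq_mul2r le_aX orbT.
  nia.
apply: (@leq_trans (a * 'C(j + X, j.+1))).
  by rewrite mulnCA leq_mul2l lower_step orbT.
by rewrite /a mulnAC diag; nia.
Qed.

Local Open Scope ring_scope.

Section CascadeSum.
Variables (R : realFieldType) (g : R) (d : nat) (H : nat -> R).
Hypothesis gap_le : forall j k, (0 < j <= d)%N ->
  'C(k, j)%:R - g * 'C(k, j.+1)%:R <= H j.

Lemma cascade_gap_le i r : (0 < i <= d)%N ->
  r%:R - g * (lam_upper i r)%:R <= \sum_(j < i) H j.+1.
Proof.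
elim: i r => [//|[|i] IHi] r /andP[_ le_id].
  by rewrite /= kmax1 addn0 big_ord1 -{1}[r]bin1 gap_le.
have -> : \sum_(j < i.+2) H j.+1 = \sum_(j < i.+1) H j.+1 + H i.+2 by rewrite big_ord_recr.
rewrite lam_upperS; set k := kmax i.+2 r.
have le_bin_r : ('C(k, i.+2) <= r)%N by exact: bin_kmax_le.
have r_split : r%:R = (r - 'C(k, i.+2))%N%:R + 'C(k, i.+2)%:R :> R.
  by rewrite -natrD subnK.
have := IHi (r - 'C(k, i.+2))%N (ltnW le_id).
have := @gap_le i.+2 k le_id.
rewrite r_split natrD mulrDr; lra.
Qed.

End CascadeSum.

Lemma subr_le_natB (R : numDomainType) a b : a%:R - b%:R <= (a - b)%N%:R :> R.
Proof.
case: (leqP b a) => [le_ba | lt_ab]; first by rewrite natrB.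
by rewrite (eqnP (ltnW lt_ab)) subr_le0 ler_nat ltnW.
Qed.

Lemma natr_bin_fact (R : nzRingType) k d : (d <= k)%N ->
  ('C(k, d) * d`!)%N%:R = \prod_(i < d) (k%:R - i%:R : R).
Proof.
move=> le_dk; rewrite bin_ffact ffact_prod natr_prod; apply: eq_bigr => i _.
by rewrite natrB // (leq_trans (ltnW (ltn_ord i))).
Qed.

Lemma sumr_nat_sub (R : numFieldType) (x : R) d :
  \sum_(i < d) (x - i%:R) = d%:R * x - d%:R * (d%:R - 1) / 2.
Proof.
elim: d => [|d IHd]; first by rewrite big_ord0 !mul0r subr0.
by rewrite big_ord_recr /= IHd -natr1; field.
Qed.

Lemma prod_subr_le_AGM (R : realFieldType) k d : (0 < d)%N -> (d <= k)%N ->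
  \prod_(i < d) (k%:R - i%:R : R) <= (k%:R - (d%:R - 1) / 2) ^+ d.
Proof.
move=> d_gt0 le_dk.
have ge0 : {in predT, forall i : 'I_d, 0 <= k%:R - i%:R :> R}.
  by move=> i _; rewrite subr_ge0 ler_nat (leq_trans (ltnW (ltn_ord i))).
have := (leif_AGM ge0).1; rewrite card_ord !big_mkcond /= sumr_nat_sub.
suff -> : (d%:R * k%:R - d%:R * (d%:R - 1) / 2) / d%:R = k%:R - (d%:R - 1) / 2 :> R by [].
by field; rewrite pnatr_eq0 -lt0n.
Qed.

Lemma expr_mul_le_AGM (R : realFieldType) (y z : R) d : (0 < d)%N ->
  0 <= y -> 0 <= z ->
  y ^+ d * z <= d%:R ^+ d / (d%:R + 1) ^+ d.+1 * (y + z) ^+ d.+1.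
Proof.
move=> d_gt0 y_ge0 z_ge0.
have d_gt0R : 0 < d%:R :> R by rewrite ltr0n.
pose E (i : 'I_d.+1) := if (i < d)%N then y / d%:R else z.
have E_ge0 : {in predT, forall i, 0 <= E i}.
  by move=> i _; rewrite /E; case: ifP => // _; exact: divr_ge0.
have prodE : \prod_(i < d.+1) E i = (y / d%:R) ^+ d * z.
  rewrite big_ord_recr /= /E ltnn (eq_bigr (fun=> y / d%:R)) => [|i _].
    by rewrite prodr_const card_ord.
  by rewrite /= ltn_ord.
have sumE : \sum_(i < d.+1) E i = y + z.
  rewrite big_ord_recr /= /E ltnn (eq_bigr (fun=> y / d%:R)) => [|i _].
    by rewrite sumr_const card_ord -(mulr_natr (y / d%:R)) divfK ?gt_eqF.
  by rewrite /= ltn_ord.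
have := (leif_AGM E_ge0).1; rewrite card_ord !big_mkcond /= prodE sumE.
rewrite -(ler_pM2l (exprn_gt0 d d_gt0R)) mulrA -exprMn [d%:R * _]mulrC divfK ?gt_eqF //.
by rewrite exprMn exprVn -natr1 [(y + z) ^+ _ * _]mulrC mulrA.
Qed.

Lemma falling_mul_le (R : realFieldType) n d k : (0 < d)%N -> (d <= n)%N -> (d <= k)%N ->
  \prod_(i < d) (k%:R - i%:R : R) * (n%:R - k%:R)
    <= d%:R ^+ d / (d%:R + 1) ^+ d.+1 * (n%:R - (d%:R - 1) / 2) ^+ d.+1.
Proof.
move=> d_gt0 le_dn le_dk.
have le_dkR : d%:R <= k%:R :> R by rewrite ler_nat.
have le_dnR : d%:R <= n%:R :> R by rewrite ler_nat.
have d_ge0 := ler0n R d.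
have c_ge0 : 0 <= d%:R ^+ d / (d%:R + 1) ^+ d.+1 :> R.
  by rewrite divr_ge0 ?exprn_ge0 ?addr_ge0 ?ler0n.
case: (leqP k n) => [le_kn | lt_nk].
  have y_ge0 : 0 <= k%:R - (d%:R - 1) / 2 :> R by lra.
  have z_ge0 : 0 <= n%:R - k%:R :> R by rewrite subr_ge0 ler_nat.
  apply: le_trans (ler_wpM2r z_ge0 (prod_subr_le_AGM R d_gt0 le_dk)) _.
  have sum_eq : k%:R - (d%:R - 1) / 2 + (n%:R - k%:R) = n%:R - (d%:R - 1) / 2 :> R.
    by rewrite addrC addrA subrK.
  by rewrite -sum_eq; exact: expr_mul_le_AGM.
have N_ge0 : 0 <= n%:R - (d%:R - 1) / 2 :> R by lra.
apply: le_trans (mulr_ge0 c_ge0 (exprn_ge0 _ N_ge0)).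
rewrite mulr_ge0_le0 ?subr_le0 ?ler_nat 1?ltnW //.
by apply: prodr_ge0 => i _; rewrite subr_ge0 ler_nat (leq_trans (ltnW (ltn_ord i))).
Qed.

Lemma falling_mul_ge (R : realFieldType) m d :
  d%:R ^+ d / (d%:R + 1) ^+ d.+1 * m%:R ^+ d.+1
    <= \prod_(i < d) ((d + d * m %/ d.+1)%N%:R - i%:R : R) * (m%:R - (d * m %/ d.+1)%N%:R).
Proof.
(* x = dm/(d+1) maximises t^d (m - t), and j <= x <= j + 1. *)
set j := (d * m %/ d.+1)%N.
have d1_gt0 : 0 < d.+1%:R :> R by rewrite ltr0n.
pose x : R := d%:R * m%:R / d.+1%:R.
have le_jx : j%:R <= x.
  by rewrite ler_pdivlMr // -!natrM ler_nat leq_trunc_div.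
have le_xj : x <= j.+1%:R.
  rewrite ler_pdivrMr // -!natrM ler_nat.
  have := divn_eq (d * m) d.+1; have := ltn_pmod (d * m) (ltn0Sn d); rewrite -/j; nia.
have x_ge0 : 0 <= x by rewrite divr_ge0 ?mulr_ge0 ?ler0n.
have mx_eq : m%:R - x = m%:R / d.+1%:R by rewrite /x -natr1; field; lra.
have mx_ge0 : 0 <= m%:R - x by rewrite mx_eq divr_ge0 ?ler0n.
have -> : d%:R ^+ d / (d%:R + 1) ^+ d.+1 * m%:R ^+ d.+1 = x ^+ d * (m%:R - x).
  rewrite mx_eq /x -natr1 !exprMn !exprVn !exprSr.
  have d1_neq0 : d%:R + 1 != 0 :> R by rewrite natr1 pnatr_eq0.
  by field; rewrite d1_neq0 expf_neq0.
apply: le_trans (ler_pM (exprn_ge0 _ x_ge0) mx_ge0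
  (lerXn2r d (x_ge0 : x \in Num.nneg) (ler0n _ j.+1) le_xj) (lerB (lexx _) le_jx)) _.
apply: ler_wpM2r; first by lra.
have -> : j.+1%:R ^+ d = \prod_(i < d) (j.+1%:R : R) by rewrite prodr_const card_ord.
apply: ler_prod => i _.
by rewrite ler0n /= -natrB ?ler_nat; have := ltn_ord i; lia.
Qed.

Lemma sum_succ_mul_expr_le (R : realFieldType) (rho : R) N : 0 <= rho -> rho < 1 ->
  \sum_(i < N) i.+1%:R * rho ^+ i <= 1 / (1 - rho) ^+ 2.
Proof.
move=> rho_ge0 rho_lt1.
have closed_form : (1 - rho) ^+ 2 * \sum_(i < N) i.+1%:R * rho ^+ i
    = 1 - N.+1%:R * rho ^+ N + N%:R * rho ^+ N.+1.
  elim: N => [|N IHN]; first by rewrite big_ord0 mulr0 expr0 mul1r mul0r; lra.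
  by rewrite big_ord_recr /= mulrDr IHN !exprS -!natr1; ring.
rewrite ler_pdivlMr ?exprn_gt0 ?subr_gt0 // mulrC closed_form.
have : N%:R * rho <= N%:R :> R by rewrite ler_piMr ?ler0n ?ltW.
have := exprn_ge0 N rho_ge0; rewrite exprS -natr1; nra.
Qed.

Section ShadowBounds.
Variables (R : realFieldType) (n d : nat).
Hypothesis d_lt_n : (d < n)%N.

Local Notation m := (n - d)%N.
Local Notation g := (d.+1%:R / (n - d)%N%:R : R).

Let m_gt0 : (0 < m)%N. Proof. by rewrite subn_gt0. Qed.
Let m_gt0R : 0 < m%:R :> R. Proof. by rewrite ltr0n. Qed.

Lemma top_gap_eq k :
  'C(k, d)%:R - g * 'C(k, d.+1)%:R = 'C(k, d)%:R * (n%:R - k%:R) / m%:R :> R.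
Proof.
case: (ltnP k d) => [lt_kd | le_dk].
  by rewrite !bin_small ?mulr0 ?subr0 ?mul0r // ltnW.
have binS_eq : d.+1%:R * 'C(k, d.+1)%:R = (k%:R - d%:R) * 'C(k, d)%:R :> R.
  by rewrite -natrB // -!natrM mul_bin_left.
rewrite mulrAC binS_eq natrB ?(ltnW d_lt_n) //; field.
by rewrite subr_eq0 gt_eqF ?ltr_nat.
Qed.


Lemma top_gap_le k : (0 < d)%N ->
  'C(k, d)%:R - g * 'C(k, d.+1)%:R
    <= d%:R ^+ d / (d%:R + 1) ^+ d.+1 * (n%:R - (d%:R - 1) / 2) ^+ d.+1
       / (m%:R * d`!%:R) :> R.
Proof.
move=> d_gt0; have fact_gt0R : 0 < d`!%:R :> R by rewrite ltr0n fact_gt0.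
rewrite top_gap_eq ler_pdivlMr ?mulr_gt0 // mulrA divfK ?lt0r_neq0 //.
case: (ltnP k d) => [lt_kd | le_dk].
  have le_dnR : d%:R <= n%:R :> R by rewrite ler_nat ltnW.
  have N_ge0 : 0 <= n%:R - (d%:R - 1) / 2 :> R by have := ler0n R d; lra.
  rewrite bin_small // !mul0r mulr_ge0 ?exprn_ge0 //.
  by rewrite divr_ge0 ?exprn_ge0 ?addr_ge0 ?ler0n.
by rewrite mulrAC -natrM natr_bin_fact // falling_mul_le // ltnW.
Qed.

Definition ceil_share j := ((j.+1 * m + d) %/ d.+1)%N.

Definition level_bin j := 'C(j + ceil_share j, j).

Lemma ceil_shareP j : (j.+1 * m <= ceil_share j * d.+1)%N.
Proof.
rewrite /ceil_share; have := divn_eq (j.+1 * m + d) d.+1.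
have := ltn_pmod (j.+1 * m + d) (ltn0Sn d); lia.
Qed.

Lemma ceil_share_gt0 j : (0 < ceil_share j)%N.
Proof. by rewrite /ceil_share divn_gt0 //; nia. Qed.

Lemma ceil_share_leS j : (ceil_share j <= ceil_share j.+1)%N.
Proof. by rewrite /ceil_share leq_div2r //; nia. Qed.

Lemma ceil_share_top : (0 < d)%N -> (ceil_share d.-1 <= m)%N.
Proof. by move=> d_gt0; rewrite /ceil_share -ltnS ltn_divLR // prednK //; nia. Qed.

Lemma level_bin_ratio j : (level_bin j * n.+1 <= level_bin j.+1 * d.+1)%N.
Proof.
rewrite /level_bin; set X := ceil_share j.
have le_X : ('C(j.+1 + X, j.+1) <= 'C(j.+1 + ceil_share j.+1, j.+1))%N.
  by rewrite leq_bin2l // leq_add2l ceil_share_leS.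
have diag := mul_bin_diag (j.+1 + X) j; rewrite addSn /= in diag.
rewrite -(leq_pmul2l (ltn0Sn j)) mulnA mulnCA.
apply: (@leq_trans ((j.+1 + X) * 'C(j + X, j) * d.+1)).
  rewrite mulnAC [X in (_ <= X)%N]mulnAC leq_mul2r; apply/orP; right.
  have := ceil_shareP j; nia.
by rewrite diag -addSn mulnAC [X in (_ <= X)%N]mulnC leq_mul2l le_X orbT.
Qed.

Lemma level_bin_chain i : (i < d)%N ->
  (level_bin (d.-1 - i) * n.+1 ^ i <= level_bin d.-1 * d.+1 ^ i)%N.
Proof.
elim: i => [|i IHi] lt_id; first by rewrite subn0 !muln1.
have := level_bin_ratio (d.-1 - i.+1).
have -> : ((d.-1 - i.+1).+1 = d.-1 - i)%N by lia.
have := IHi (ltnW lt_id); rewrite !expnS; nia.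
Qed.

Lemma level_bin_top : (0 < d)%N -> (level_bin d.-1 * n <= d * 'C(n, d))%N.
Proof.
move=> d_gt0; have := mul_bin_diag n d.-1; rewrite prednK // => <-.
rewrite mulnC leq_mul2l /level_bin leq_bin2l ?orbT //.
by have := ceil_share_top d_gt0; lia.
Qed.

Lemma mid_gap_le j k :
  'C(k, j)%:R - g * 'C(k, j.+1)%:R <= (level_bin j)%:R / j.+1%:R :> R.
Proof.
have j1_gt0 : 0 < j.+1%:R :> R by rewrite ltr0n.
have scaled : ('C(k, j)%:R - g * 'C(k, j.+1)%:R) * j.+1%:R * m%:R
    = 'C(k, j)%:R * ((j.+1 * m)%N%:R - (d.+1 * (k - j))%N%:R) :> R.
  have binS_eq : (k - j)%N%:R * 'C(k, j)%:R = j.+1%:R * 'C(k, j.+1)%:R :> R.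
    by rewrite -!natrM mul_bin_left.
  rewrite !natrM; transitivity (j.+1%:R * m%:R * 'C(k, j)%:R
    - d.+1%:R * ((k - j)%N%:R * 'C(k, j)%:R) : R); last by ring.
  by rewrite binS_eq; field; exact: lt0r_neq0.
rewrite ler_pdivlMr // -(ler_pM2r m_gt0R) scaled.
apply: le_trans (ler_wpM2l (ler0n _ _) (subr_le_natB _ _ _)) _.
rewrite -!natrM ler_nat /level_bin.
exact: bin_mul_slack_le (ceil_share_gt0 j) (ceil_shareP j).
Qed.

Local Notation rho := (d.+1%:R / n.+1%:R : R).

Lemma level_bin_geometric i : (i < d)%N ->
  (level_bin (d.-1 - i))%:R <= (level_bin d.-1)%:R * rho ^+ i :> R.
Proof.
move=> lt_id; rewrite exprMn exprVn mulrA ler_pdivlMr ?exprn_gt0 ?ltr0n //.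
by rewrite -!natrX -!natrM ler_nat level_bin_chain.
Qed.

Lemma mid_term_le i : (i < d.-1)%N ->
  (level_bin (d.-1 - i))%:R / (d.-1 - i).+1%:R
    <= (level_bin d.-1)%:R / d%:R * (i.+1%:R * rho ^+ i) :> R.
Proof.
move=> lt_id; have lt_id' : (i < d)%N by apply: leq_trans lt_id (leq_pred d).
have d_gt0 : (0 < d)%N by apply: leq_ltn_trans lt_id'.
have weight : (d.-1 - i).+1%:R^-1 <= i.+1%:R / d%:R :> R.
  rewrite -[_^-1]mul1r ler_pdivrMr ?ltr0n // mulrAC ler_pdivlMr ?ltr0n //.
  by rewrite mul1r -natrM ler_nat; nia.
have -> : (level_bin d.-1)%:R / d%:R * (i.+1%:R * rho ^+ i)
    = (level_bin d.-1)%:R * rho ^+ i * (i.+1%:R / d%:R) :> R by ring.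
by apply: ler_pM (level_bin_geometric lt_id') weight; rewrite ?invr_ge0 ?ler0n.
Qed.

Lemma sum_mid_term_le :
  \sum_(j < d.-1) (level_bin j.+1)%:R / j.+2%:R
    <= (level_bin d.-1)%:R / d%:R * (1 / (1 - rho) ^+ 2) :> R.
Proof.
have reversed : \sum_(j < d.-1) (level_bin j.+1)%:R / j.+2%:R
    = \sum_(i < d.-1) (level_bin (d.-1 - i))%:R / (d.-1 - i).+1%:R :> R.
  rewrite (reindex_inj rev_ord_inj); apply: eq_bigr => i _ /=.
  by have -> : ((d.-1 - i.+1).+1 = d.-1 - i)%N by have := ltn_ord i; lia.
rewrite reversed; apply: le_trans (ler_sum _ (fun i _ => mid_term_le (ltn_ord i))) _.
rewrite -mulr_sumr ler_wpM2l ?divr_ge0 ?ler0n // sum_succ_mul_expr_le ?divr_ge0 //.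
by rewrite ltr_pdivrMr ?ltr0n // mul1r ltr_nat.
Qed.

Lemma geometric_tail_le : (2 <= d)%N ->
  (level_bin d.-1)%:R / d%:R * (1 / (1 - rho) ^+ 2)
    <= 'C(n, d)%:R * ((d%:R + 1) * (n%:R + 1) / ((d%:R - 1) * m%:R ^+ 2)) :> R.
Proof.
move=> d_ge2; have d_gt0 : (0 < d)%N by apply: leq_trans d_ge2.
have n_gt0R : 0 < n%:R :> R by rewrite ltr0n (leq_ltn_trans _ d_lt_n).
have d_gt1R : 1 < d%:R :> R by rewrite (ltr_nat R 1).
have top_le : (level_bin d.-1)%:R / d%:R <= 'C(n, d)%:R / n%:R :> R.
  rewrite ler_pdivrMr ?ltr0n // mulrAC ler_pdivlMr //.
  by rewrite -!natrM ler_nat [(_ * d)%N]mulnC level_bin_top.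
have dist_eq : 1 / (1 - rho) ^+ 2 = (n.+1%:R / m%:R) ^+ 2.
  rewrite natrB ?(ltnW d_lt_n) // -!natr1; field.
  by rewrite subr_eq0 gt_eqF ?ltr_nat // natr1 lt0r_neq0.
rewrite dist_eq; apply: le_trans (ler_wpM2r (exprn_ge0 _ _) top_le) _.
  by rewrite divr_ge0 ?ler0n.
have ratio_le : n.+1%:R / n%:R <= (d%:R + 1) / (d%:R - 1) :> R.
  have le_dnR : d%:R <= n%:R :> R by rewrite ler_nat ltnW.
  rewrite ler_pdivrMr // mulrAC ler_pdivlMr ?subr_gt0 // -natr1; nra.
have -> : 'C(n, d)%:R / n%:R * (n.+1%:R / m%:R) ^+ 2
    = 'C(n, d)%:R * (n%:R + 1) / m%:R ^+ 2 * (n.+1%:R / n%:R) :> R.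
  by rewrite -natr1; field; rewrite !lt0r_neq0.
have -> : 'C(n, d)%:R * ((d%:R + 1) * (n%:R + 1) / ((d%:R - 1) * m%:R ^+ 2))
    = 'C(n, d)%:R * (n%:R + 1) / m%:R ^+ 2 * ((d%:R + 1) / (d%:R - 1)) :> R.
  by field; rewrite subr_eq0 gt_eqF // lt0r_neq0.
by rewrite ler_wpM2l // divr_ge0 ?exprn_ge0 ?mulr_ge0 ?addr_ge0 ?ler0n.
Qed.

Lemma delta_ndE lam :
  delta_nd R n d lam = (lam%:R - g * (lam_upper d lam)%:R) / 'C(n, d)%:R.
Proof.
have bin_gt0R : 0 < 'C(n, d)%:R :> R by rewrite ltr0n bin_gt0 ltnW.
have binS_eq : 'C(n, d.+1)%:R = 'C(n, d)%:R * m%:R / d.+1%:R :> R.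
  by rewrite -natrM mulnC -mul_bin_left natrM mulrC mulKf // pnatr_eq0.
rewrite /delta_nd binS_eq; field.
by rewrite !lt0r_neq0 // addrC natr1 ltr0n.
Qed.

Lemma natr_prod_window :
  \prod_(m <= i < n.+1) (i%:R : R) = m%:R * ('C(n, d) * d`!)%N%:R.
Proof. by rewrite -natr_prod prod_bin_window ?natrM // ltnW. Qed.

Lemma delta_bar_ge : (0 < d)%N ->
  d%:R ^+ d / (d%:R + 1) ^+ d.+1 * (m%:R ^+ d.+1 / \prod_(m <= i < n.+1) (i%:R : R))
    <= delta_bar R n d.
Proof.
move=> d_gt0; set j := (d * m %/ d.+1)%N.
have le_jm : (j <= m)%N by have := leq_trunc_div (d * m) d.+1; rewrite -/j; nia.
have lam_lt : ('C(d + j, d) < ('C(n, d)).+1)%N by rewrite ltnS leq_bin2l //; lia.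
apply: le_trans (le_bigmax _ (fun lam : 'I__ => delta_nd R n d lam) (Ordinal lam_lt)).
have bin_gt0R : 0 < 'C(n, d)%:R :> R by rewrite ltr0n bin_gt0 ltnW.
have fact_gt0R : 0 < d`!%:R :> R by rewrite ltr0n fact_gt0.
rewrite /= delta_ndE lam_upper_bin ?leq_addr // top_gap_eq natr_prod_window.
have -> : n%:R - (d + j)%N%:R = m%:R - j%:R :> R.
  by rewrite natrB ?(ltnW d_lt_n) // natrD; ring.
have -> : 'C(d + j, d)%:R * (m%:R - j%:R) / m%:R / 'C(n, d)%:R
    = ('C(d + j, d) * d`!)%N%:R * (m%:R - j%:R) / (m%:R * ('C(n, d) * d`!)%N%:R) :> R.
  by rewrite !natrM; field; rewrite !lt0r_neq0.
have P_gt0 : 0 < m%:R * ('C(n, d) * d`!)%N%:R :> R by rewrite natrM !mulr_gt0.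
rewrite mulrA ler_pM2r ?invr_gt0 //.
by rewrite natr_bin_fact ?leq_addr //; exact: falling_mul_ge.
Qed.

Lemma delta_bar_le : (2 <= d)%N ->
  delta_bar R n d
    <= d%:R ^+ d / (d%:R + 1) ^+ d.+1
         * ((n%:R - (d%:R - 1) / 2) ^+ d.+1 / \prod_(m <= i < n.+1) (i%:R : R))
       + (d%:R + 1) * (n%:R + 1) / ((d%:R - 1) * m%:R ^+ 2).
Proof.
move=> d_ge2; have d_gt0 : (0 < d)%N by apply: leq_trans d_ge2.
set c : R := d%:R ^+ d / (d%:R + 1) ^+ d.+1.
set N : R := n%:R - (d%:R - 1) / 2.
set tail : R := (d%:R + 1) * (n%:R + 1) / ((d%:R - 1) * m%:R ^+ 2).
have bin_gt0R : 0 < 'C(n, d)%:R :> R by rewrite ltr0n bin_gt0 ltnW.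
have fact_gt0R : 0 < d`!%:R :> R by rewrite ltr0n fact_gt0.
have le_dnR : d%:R <= n%:R :> R by rewrite ler_nat ltnW.
have d_gt1R : 1 < d%:R :> R by rewrite (ltr_nat R 1).
have c_ge0 : 0 <= c by rewrite divr_ge0 ?exprn_ge0 ?addr_ge0 ?ler0n.
have N_ge0 : 0 <= N by rewrite /N; lra.
have tail_ge0 : 0 <= tail.
  by rewrite /tail divr_ge0 // mulr_ge0 ?exprn_ge0 ?ler0n //; lra.
pose top_bound : R := c * N ^+ d.+1 / (m%:R * d`!%:R).
pose H j : R := if j == d then top_bound else (level_bin j)%:R / j.+1%:R.
have gap_le j k : (0 < j <= d)%N -> 'C(k, j)%:R - g * 'C(k, j.+1)%:R <= H j.
  move=> /andP[_ le_jd]; rewrite /H; case: eqP => [-> | _]; first exact: top_gap_le.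
  exact: mid_gap_le.
have split_sum : \sum_(j < d) H j.+1
    = \sum_(j < d.-1) (level_bin j.+1)%:R / j.+2%:R + top_bound.
  rewrite -(prednK d_gt0) big_ord_recr /= prednK // /H eqxx; congr (_ + _).
  by apply: eq_bigr => i _; rewrite ifN //; have := ltn_ord i; lia.
rewrite /delta_bar; apply: bigmax_le => [|lam _].
  rewrite addr_ge0 // mulr_ge0 // divr_ge0 ?exprn_ge0 //.
  by apply: prodr_ge0 => i _; rewrite ler0n.
rewrite delta_ndE ler_pdivrMr //.
apply: le_trans (cascade_gap_le gap_le (i := d) _ _) _; first by rewrite d_gt0 leqnn.
rewrite split_sum natr_prod_window.
have -> : (c * (N ^+ d.+1 / (m%:R * ('C(n, d) * d`!)%N%:R)) + tail) * 'C(n, d)%:R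
    = top_bound + 'C(n, d)%:R * tail.
  by rewrite natrM /top_bound; field; rewrite !lt0r_neq0.
rewrite [X in _ <= X]addrC lerD2r.
exact: le_trans sum_mid_term_le (geometric_tail_le d_ge2).
Qed.

End ShadowBounds.

Unset Implicit Arguments.

Theorem lemma6p2 (R : realFieldType) (n d : nat) :
  (2 <= d)%N -> (d < n)%N ->
  let c : R := (d%:R ^+ d) / ((d%:R + 1) ^+ d.+1) in
  let P : R := \prod_((n - d)%N <= i < n.+1) (i%:R : R) in
  c * (((n - d)%N)%:R ^+ d.+1 / P) <= delta_bar R n d /\
  delta_bar R n d <=
    c * ((n%:R - (d%:R - 1) / 2) ^+ d.+1 / P)
    + ((d%:R + 1) * (n%:R + 1)) / ((d%:R - 1) * ((n - d)%N)%:R ^+ 2).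
Proof.
move=> d_ge2 d_lt_n c P.
by split; [apply: delta_bar_ge; last exact: ltnW | exact: delta_bar_le].
Qed.
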